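(* Let $\Im^k=(V,L)$ be the $(k+1)$-regular tree ($k\ge 1$), let $\Omega=\mathbb{Z}^V$, let $\mathcal{N}$ be the set of all finite nonempty subsets of $V$, and fix $\theta>0$. For $\Lambda\in\mathcal{N}$ and $\sigma\in\Omega$ define $$U_\Lambda(\sigma)=H_\Lambda(\sigma_\Lambda)=\sum_{j=1}^{|\Lambda|}\Big[b_j(\sigma_\Lambda)\ln\frac{\theta}{j}-\ln\big(b_j(\sigma_\Lambda)!\big)\Big],$$ where $\sigma_\Lambda$ is the restriction of $\sigma$ to $\Lambda$ and $b_j(\sigma_\Lambda)$ is the number of distinct values in $\mathbb{Z}$ that appear exactly $j$ times among $\{\sigma(x):x\in\Lambda\}$. Then the potential $U=\{U_\Lambda\}_{\Lambda\in\mathcal{N}}$ is not absolutely summable: for every $x\in V$, $$\sum_{\Lambda\in\mathcal{N},\,x\in\Lambda}\|U_\Lambda\|_\infty=\infty,\qquad \|f\|_\infty:=\sup_{\sigma\in\Omega}|f(\sigma)|.$$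
   Context: A potential $U=\{U_\Lambda\}_{\Lambda\in\mathcal N}$ is called absolutely summable if $\sum_{\Lambda\in\mathcal N,\,x\in\Lambda}\|U_\Lambda\|_\infty<\infty$ for all $x\in V$. The potential above is the one associated with the multivariate Ewens weights $\frac{1}{Z_{|\Lambda|}(\theta)}\prod_{j=1}^{|\Lambda|}(\theta/j)^{b_j(\sigma_\Lambda)}\frac{1}{b_j(\sigma_\Lambda)!}$, via $H_\Lambda=\ln$ of the unnormalized weight. *)

From HB Require Import structures.
From mathcomp Require Import all_boot all_order all_algebra finmap.
From mathcomp Require Import all_classical all_reals all_analysis.
Set Implicit Arguments. Unset Strict Implicit. Unset Printing Implicit Defensive.
Import Order.TTheory GRing.Theory Num.Theory.

Local Open Scope fset_scope.
Local Open Scope ring_scope.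

(* walks: x :: p is a walk along adj; non-backtracking: no a b a pattern *)
Fixpoint nonbacktracking (V : eqType) (x : V) (p : seq V) : bool :=
  match p with
  | y :: (z :: _) as q => (x != z) && nonbacktracking y q
  | _ => true
  end.

(*  simple graph, every vertex has exactly k+1 neighbours, connected, and *)
(*  no closed non-backtracking walk of positive length (acyclic).         *)
Definition is_regular_tree (V : eqType) (k : nat) (adj : rel V) : Prop :=
  [/\ (forall x, ~~ adj x x),
      (forall x y, adj x y = adj y x),
      (forall x, exists s : seq V,
          [/\ uniq s, size s = k.+1 & forall y, adj x y = (y \in s)]),
      (forall x y, exists p : seq V, path adj x p /\ last x p = y)
    & (forall x (p : seq V), path adj x p -> nonbacktracking x p ->
          last x p = x -> p = [::])].

Definition mult (V : choiceType) (L : {fset V}) (sigma : V -> int) (v : int)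
  : nat := #|` [fset y in L | sigma y == v]|.

Definition bcount (V : choiceType) (L : {fset V}) (sigma : V -> int) (j : nat)
  : nat := #|` [fset v in [fset sigma y | y in L] | mult L sigma v == j]|.

Definition ewensU (R : realType) (theta : R) (V : choiceType)
  (L : {fset V}) (sigma : V -> int) : R :=
  \sum_(1 <= j < (#|` L|).+1)
     ((bcount L sigma j)%:R * ln (theta / j%:R)
      - ln ((bcount L sigma j)`!)%:R).

Definition supnorm (R : realType) (T : Type) (f : T -> R) : \bar R :=
  ereal_sup [set (`|f s|)%:E | s in [set: T]].

(** The ray argument: since every vertex of the tree has at least two
  neighbours, one can always leave a vertex along an edge other than the one
  just used; acyclicity makes such a non-backtracking walk from [x] injective,
  so its initial segments are infinitely many distinct finite sets containing
  [x].  On the constant configuration the Ewens weight of [L] reduces to the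
  single cycle term, [U_L = ln (theta / |L|)], whose absolute value is at
  least [1] as soon as [|L| >= theta e]. *)

From HB Require Import structures.
From mathcomp Require Import all_boot all_order all_algebra finmap.
From mathcomp Require Import all_classical all_reals all_analysis.
Import Order.TTheory GRing.Theory Num.Theory.

Set Implicit Arguments.
Unset Strict Implicit.
Unset Printing Implicit Defensive.

Local Open Scope classical_set_scope.
Local Open Scope ring_scope.

Lemma esum_eq_pinfty_injective (R : realType) (T : choiceType) (I : set T)
    (a : T -> \bar R) (u : nat -> T) :
  injective u -> (forall n, I (u n)) -> (forall n, (1 <= a (u n))%E) ->
  esum I a = +oo%E.
Proof.
move=> u_inj Iu a_ge1; apply: eq_infty => r.
set M := (Num.truncn r).+1.
apply: (@le_trans _ _ (M%:R)%:E); first by rewrite lee_fin ltW // truncnS_gt.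
apply: esum_ge; exists (u @` `I_M).
  by split; [exact/finite_image/finite_II | move=> _ [n _ <-]].
rewrite fsbig_image; last by move=> i j _ _; exact: u_inj.
rewrite -fsbig_ord; apply: (@le_trans _ _ (\sum_(i < M) 1%E)%R).
  by rewrite sumEFin sumr_const card_ord.
by apply: lee_sum => i _; exact: a_ge1.
Qed.

Lemma uniq_exists_neq (T : eqType) (s : seq T) (p : T) :
  uniq s -> (1 < size s)%N -> exists2 z, z \in s & z != p.
Proof.
case: s => [|a [|b s]] //= /andP[a_notin _] _.
have ab : a != b by apply: contraNneq a_notin => ->; rewrite mem_head.
have [ap|] := eqVneq a p; last by exists a; rewrite ?mem_head.
by exists b; rewrite ?inE ?eqxx ?orbT // -ap eq_sym.
Qed.

Section NonbacktrackingWalk.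
Variables (V : eqType) (adj : rel V) (w : nat -> V).
Hypothesis w_adj : forall n, adj (w n) (w n.+1).
Hypothesis w_nb : forall n, w n.+2 != w n.

Lemma path_walk i n : path adj (w i) (map w (iota i.+1 n)).
Proof. by elim: n i => [|n IHn] i //=; rewrite w_adj IHn. Qed.

Lemma nonbacktracking_walk i n :
  nonbacktracking (w i) (map w (iota i.+1 n)).
Proof.
elim: n i => [|[|n] IHn] i //=.
by rewrite eq_sym w_nb; exact: (IHn i.+1).
Qed.

Lemma last_walk i n : last (w i) (map w (iota i.+1 n)) = w (i + n).
Proof. by elim: n i => [|n IHn] i; rewrite ?addn0 //= IHn addSnnS. Qed.

Hypothesis acyclic : forall x (p : seq V),
  path adj x p -> nonbacktracking x p -> last x p = x -> p = [::].

Lemma walk_injective : injective w.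
Proof.
suff lt_neq i j : (i < j)%N -> w i != w j.
  move=> i j eq_w; case: (ltngtP i j) => // [/lt_neq | /lt_neq];
  by rewrite eq_w eqxx.
move=> lt_ij; have [n ->] : exists n, j = (i + n.+1)%N.
  by exists (j - i.+1)%N; rewrite addnS -addSn subnKC.
apply/negP => /eqP cycle_back.
have := acyclic (path_walk i n.+1) (nonbacktracking_walk i n.+1).
by rewrite last_walk -cycle_back => /(_ erefl).
Qed.

End NonbacktrackingWalk.

Lemma nonbacktracking_walk_exists (V : choiceType) (adj : rel V) :
  (forall p c, exists z, adj c z && (z != p)) ->
  forall x, exists w : nat -> V, [/\ w 0%N = x,
    forall n, adj (w n) (w n.+1) & forall n, w n.+2 != w n].
Proof.
move=> other x; pose next p c := xchoose (other p c).
have next_spec p c : adj c (next p c) && (next p c != p) := xchooseP (other p c).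
pose step (e : V * V) := (e.2, next e.1 e.2).
pose w n := (iter n step (x, next x x)).1.
have wS n : w n.+1 = (iter n step (x, next x x)).2 by rewrite /w iterS.
have wSS n : w n.+2 = next (w n) (w n.+1) by rewrite wS iterS /= -wS.
exists w; split => // n.
- by case: n => [|n]; [rewrite wS; case/andP: (next_spec x x)
                     | rewrite wSS; case/andP: (next_spec (w n) (w n.+1))].
- by rewrite wSS; case/andP: (next_spec (w n) (w n.+1)).
Qed.

Lemma regular_tree_ray (V : choiceType) (k : nat) (adj : rel V) :
  (1 <= k)%N -> is_regular_tree k adj ->
  forall x, exists w : nat -> V, w 0%N = x /\ injective w.
Proof.
move=> k_ge1 [_ _ deg _ acyclic] x.
have other p c : exists z, adj c z && (z != p).
  have [s [s_uniq s_size adj_s]] := deg c.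
  have [|z zs zp] := uniq_exists_neq p s_uniq; first by rewrite s_size ltnS.
  by exists z; rewrite adj_s zs.
have [w [w0 w_adj w_nb]] := nonbacktracking_walk_exists other x.
by exists w; split => //; exact: walk_injective w_adj w_nb acyclic.
Qed.

Section EwensConstant.
Variables (V : choiceType) (L : {fset V}) (c : int).

Lemma mult_const v : mult L (fun=> c) v = if v == c then #|` L| else 0%N.
Proof.
rewrite /mult; have [_ | _] := eqVneq v c.
  by congr (#|` _|); apply/fsetP => y; rewrite !inE andbT.
by apply/eqP; rewrite cardfs_eq0; apply/eqP/fsetP => y; rewrite !inE andbF.
Qed.

Hypothesis L_gt0 : (0 < #|` L|)%N.

Lemma bcount_const j : bcount L (fun=> c) j = (j == #|` L|).
Proof.
have [y0 y0L] : exists y, y \in L by apply/fset0Pn; rewrite -cardfs_gt0.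
rewrite /bcount; have -> : [fset c | _ in L]%fset = [fset c]%fset.
  by apply/fsetP => v; rewrite inE; apply/imfsetP/eqP => [[y _ ->] | ->] //; exists y0.
have [-> | j_neq] := eqVneq j #|` L|.
  transitivity #|` [fset c]%fset|; last exact: cardfs1.
  congr (#|` _|); apply/fsetP => v; rewrite !inE mult_const.
  by case: eqVneq => //= _; rewrite eqxx.
apply/eqP; rewrite cardfs_eq0; apply/eqP/fsetP => v; rewrite !inE mult_const.
by case: eqVneq => //= _; rewrite eq_sym (negbTE j_neq).
Qed.

Lemma ewensU_const (R : realType) (theta : R) :
  ewensU theta L (fun=> c) = ln (theta / (#|` L|)%:R).
Proof.
rewrite /ewensU big_nat_recr //= bcount_const eqxx mul1r ln1 subr0.
rewrite big_nat_cond big1 ?add0r // => j /andP[/andP[_ lt_j] _].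
by rewrite bcount_const (ltn_eqF lt_j) mul0r ln1 subr0.
Qed.

End EwensConstant.

Lemma supnorm_ge (R : realType) (T : Type) (f : T -> R) (s : T) :
  ((`|f s|)%:E <= supnorm f)%E.
Proof. by apply: ereal_sup_ubound; exists s. Qed.

Lemma ewensU_supnorm_ge1 (R : realType) (theta : R) (V : choiceType)
    (L : {fset V}) :
  0 < theta -> theta * expR 1 <= (#|` L|)%:R -> (1 <= supnorm (ewensU theta L))%E.
Proof.
move=> theta_gt0 large; have L_gt0 : (0 < #|` L|)%N.
  by rewrite -(ltr0n R); apply: lt_le_trans large; rewrite mulr_gt0 ?expR_gt0.
apply: le_trans (supnorm_ge _ (fun=> 0%Z)); rewrite lee_fin ewensU_const //.
have n_gt0 : 0 < (#|` L|)%:R :> R by rewrite ltr0n.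
rewrite -normrN -lnV ?posrE ?divr_gt0 // invf_div; apply: le_trans (ler_norm _).
rewrite -[X in X <= _](expRK 1) ler_ln ?posrE ?divr_gt0 ?expR_gt0 //.
by rewrite ler_pdivlMr // mulrC.
Qed.

Theorem lemma3p2 (R : realType) (k : nat) (hk : (1 <= k)%N)
  (V : choiceType) (adj : rel V) (htree : is_regular_tree k adj)
  (theta : R) (htheta : 0 < theta) :
  forall x : V,
    esum [set L : {fset V} | x \in L]
         (fun L => supnorm (ewensU theta L)) = +oo%E.
Proof.
move=> x; have [w [w0 w_inj]] := regular_tree_ray hk htree x.
pose N := (Num.truncn (theta * expR 1)).+1.
pose segment n := [fset w i | i in iota 0 (n + N)]%fset.
have card_segment n : #|` segment n| = (n + N)%N.
  by rewrite card_imfset //= undup_id ?iota_uniq // size_iota.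
apply: (@esum_eq_pinfty_injective _ _ _ _ segment).
- by move=> m n /(congr1 (fun L => #|` L|)); rewrite !card_segment => /addIn.
- by move=> n; rewrite /= -w0; apply/imfsetP; exists 0%N; rewrite ?mem_iota ?addnS.
- move=> n; apply: ewensU_supnorm_ge1 => //; rewrite card_segment.
  apply: le_trans (ltW (truncnS_gt _)) _.
  by rewrite ler_nat leq_addl.
Qed.
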